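(* Let $n\ge 2$ and $m\ge 1$, let $(\mathbb{R}^n,g_0)$ be Euclidean space with coordinates $x=(x_1,\dots,x_n)$ and metric components $(g_0)_{ij}=\delta_{ij}$, and let $(F^m,g_F)$ be a Riemannian manifold of dimension $m$. Let $f,h:\mathbb{R}^n\to\mathbb{R}$ be smooth functions with $f>0$, and consider the warped product $M=\mathbb{R}^n\times_f F^m$ with metric $g=g_0\oplus f^2 g_F$. If $(M,g)$ is a gradient Ricci soliton with potential function $h$ (that is, $\mathrm{Ric}_g+\mathrm{Hess}_g(h)=\rho g$ for some constant $\rho\in\mathbb{R}$), then the warping function $f$ is invariant by translation, i.e. there exist constants $a_i,b_i\in\mathbb{R}$ and a function $P$ of class at least $C^1$ such that $$f(x_1,\dots,x_n)=P\Big(\sum_{i=1}^n (a_i x_i+b_i)\Big).$$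
   Context: A warped product $B\times_f F$ is the product manifold $B\times F$ with metric $g_B\oplus f^2 g_F$, where $f:B\to\mathbb{R}$ is positive. Functions on $\mathbb{R}^n$ (such as $f$ and $h$) are identified with their lifts to $M$ via the projection onto the first factor. $\mathrm{Ric}_g$ denotes the Ricci tensor and $\mathrm{Hess}_g(h)$ the Hessian of $h$ with respect to $g$. *)

From HB Require Import structures.
From mathcomp Require Import all_boot all_order all_algebra.
From mathcomp Require Import all_classical all_reals all_analysis.
Set Implicit Arguments. Unset Strict Implicit. Unset Printing Implicit Defensive.
Import Order.TTheory GRing.Theory Num.Theory.
Import numFieldNormedType.Exports.
Local Open Scope classical_set_scope.
Local Open Scope ring_scope.

Section Coord.
Variable R : realType.

Definition partial {N : nat} (k : 'I_N) (F : 'rV[R]_N -> R) : 'rV[R]_N -> R :=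
  fun p => 'D_(delta_mx ord0 k) F p.

Definition iter_partial {N : nat} (s : seq 'I_N) (F : 'rV[R]_N -> R) :=
  foldr (@partial N) F s.

Definition smooth_on {N : nat} (U : set 'rV[R]_N) (F : 'rV[R]_N -> R) :=
  forall (s : seq 'I_N) (p : 'rV[R]_N), U p -> differentiable (iter_partial s F) p.

Definition riemannian_metric_on {N : nat} (U : set 'rV[R]_N)
  (g : 'rV[R]_N -> 'M[R]_N) :=
  (forall i j, smooth_on U (fun p => g p i j)) /\
  (forall p, U p -> (g p)^T = g p) /\
  (forall p, U p -> forall v : 'rV[R]_N, v != 0 -> 0 < (v *m g p *m v^T) ord0 ord0).

Definition Christoffel {N : nat} (g : 'rV[R]_N -> 'M[R]_N) (k i j : 'I_N)
  (p : 'rV[R]_N) : R :=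
  2^-1 * \sum_(l < N) (invmx (g p)) k l *
     (partial i (fun q => g q j l) p + partial j (fun q => g q i l) p
      - partial l (fun q => g q i j) p).

Definition Ricci {N : nat} (g : 'rV[R]_N -> 'M[R]_N) (i j : 'I_N)
  (p : 'rV[R]_N) : R :=
  \sum_(k < N) (partial k (Christoffel g k i j) p - partial j (Christoffel g k i k) p
    + \sum_(l < N) (Christoffel g k k l p * Christoffel g l i j p
                    - Christoffel g k j l p * Christoffel g l i k p)).

Definition Hess {N : nat} (g : 'rV[R]_N -> 'M[R]_N) (H : 'rV[R]_N -> R)
  (i j : 'I_N) (p : 'rV[R]_N) : R :=
  partial i (partial j H) p - \sum_(k < N) Christoffel g k i j p * partial k H p.

Definition warped_metric {n m : nat} (f : 'rV[R]_n -> R) (gF : 'rV[R]_m -> 'M[R]_m)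
  : 'rV[R]_(n + m) -> 'M[R]_(n + m) :=
  fun p => block_mx 1%:M 0 0 ((f (lsubmx p)) ^+ 2 *: gF (rsubmx p)).

End Coord.

From HB Require Import structures.
From mathcomp Require Import all_boot all_order all_algebra.
From mathcomp Require Import all_classical all_reals all_analysis.
From mathcomp Require Import ring lra.
Import Order.TTheory GRing.Theory Num.Theory.
Import numFieldNormedType.Exports.
Local Open Scope classical_set_scope.
Local Open Scope ring_scope.
Set Implicit Arguments. Unset Strict Implicit. Unset Printing Implicit Defensive.

(** The Christoffel symbols of g_0 + f^2 g_F with a lower base index all vanish
    except Gamma^a_{ib} = (d_i f / f) delta^a_b, so the base block of the
    soliton equation reads  Hess h - (m / f) Hess f = rho g_0.  Solving it for
    Hess f and comparing the third derivatives f_{kij} = f_{ikj} gives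
    f_{ij} f_k = f_{kj} f_i: every row of Hess f is parallel to grad f.
    Hence grad f is constant along each line that starts tangent to a level
    set of f (the times at which grad f keeps its initial value form a clopen
    subset of R), so grad f is everywhere parallel to one fixed vector a and
    f(x) = P(a . x) with P(s) = f(s c), c . a = 1. *)

Section LineRestriction.
Variables (R : realType) (V W : normedModType R).
Implicit Types (F : V -> W) (q v : V) (t : R).

Let line_quotientE F q v t :
  (fun h : R => h^-1 *: (((fun s : R => F (q + s *: v)) \o shift t) (h *: 1)
                          - F (q + t *: v)))
  = (fun h => h^-1 *: ((F \o shift (q + t *: v)) (h *: v) - F (q + t *: v))).
Proof.
apply/funext => h /=; congr (_ *: (F _ - _)).
by rewrite [h *: 1]mulr1 scalerDl addrCA addrA.
Qed.

Lemma derive_line F q v t :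
  'D_1 (fun s : R => F (q + s *: v)) t = 'D_v F (q + t *: v).
Proof. by rewrite /derive line_quotientE. Qed.

Lemma derivable_line F q v t :
  derivable (fun s : R => F (q + s *: v)) t 1 <-> derivable F (q + t *: v) v.
Proof. by rewrite /derivable line_quotientE. Qed.

Lemma is_derive_line F q v t : derivable F (q + t *: v) v ->
  is_derive t 1 (fun s : R => F (q + s *: v)) ('D_v F (q + t *: v)).
Proof. by move=> dF; apply: DeriveDef; [exact/derivable_line | exact: derive_line]. Qed.

End LineRestriction.

Lemma derive_eq_on_lines (R : realType) (V V' W : normedModType R)
    (F : V -> W) (G : V' -> W) p v q w :
  (forall t : R, F (p + t *: v) = G (q + t *: w)) -> 'D_v F p = 'D_w G q.
Proof.
move=> FG; have := derive_line F p v 0; have := derive_line G q w 0.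
rewrite !scale0r !addr0 => <- <-.
by have -> : (fun t : R => F (p + t *: v)) = (fun t => G (q + t *: w)) by apply/funext.
Qed.

Lemma derive_eq0_cst_line (R : realType) (V : normedModType R) (F : V -> R) x v :
  (forall y, derivable F y v) -> (forall y, 'D_v F y = 0) -> F (x + v) = F x.
Proof.
move=> dF DF0; have := @is_derive_0_is_cst R (fun t => F (x + t *: v)) 1 0.
rewrite scale1r scale0r addr0; apply => t.
by apply: is_derive_eq (is_derive_line (dF _)) _.
Qed.

Section RealLine.
Variable R : realType.
Implicit Types (phi : R -> R) (t : R).

Lemma is_derive0_cst_ball phi t0 d :
  (forall t, `|t - t0| < d -> is_derive t 1 phi 0) ->
  forall t, `|t - t0| < d -> phi t = phi t0.
Proof.
move=> D0 t td.
have inb s : s \in `[Num.min t t0, Num.max t t0] -> `|s - t0| < d.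
  rewrite in_itv /=; move: td; rewrite !ltr_norml.
  by case: (lerP t t0) => tt0 /andP[? ?] /andP[? ?]; apply/andP; split; lra.
have mm : Num.min t t0 <= Num.max t t0 by rewrite ge_min !le_max !lexx.
have cont : {within `[Num.min t t0, Num.max t t0], continuous phi}.
  by apply: derivable_within_continuous => s /inb /D0 [].
have [c _] := MVT_segment mm (fun s hs => D0 s (inb s (subset_itv_oo_cc hs))) cont.
rewrite mul0r => /eqP; rewrite subr_eq0 => /eqP.
by case: (lerP t t0) => _ ->.
Qed.

Lemma MVT_pos phi dphi s : 0 < s -> (forall t, is_derive t 1 phi (dphi t)) ->
  exists2 c, 0 < c < s & phi s - phi 0 = s * dphi c.
Proof.
move=> s0 D.
have cont : {within `[0, s], continuous phi}.
  by apply: derivable_within_continuous => r _; case: (D r).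
have [c cI E] := MVT s0 (fun r _ => D r) cont.
by exists c; [move: cI; rewrite in_itv | rewrite E subr0 mulrC].
Qed.

End RealLine.

Section Schwarz.
Variables (R : realType) (V : normedModType R).
Implicit Types (F : V -> R) (u w x : V) (s : R).

Definition second_difference F u w x s :=
  F (x + s *: u + s *: w) - F (x + s *: u) - F (x + s *: w) + F x.

Lemma second_differenceC F u w x s :
  second_difference F u w x s = second_difference F w u x s.
Proof. by rewrite /second_difference [x + s *: u + s *: w]addrAC; ring. Qed.

Lemma second_difference_mvt F u w x s : 0 < s ->
  (forall y, derivable F y u) -> (forall y, derivable ('D_u F) y w) ->
  exists xi eta, [/\ 0 < xi < s, 0 < eta < s &
    second_difference F u w x s = s ^+ 2 * 'D_w ('D_u F) (x + xi *: u + eta *: w)].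
Proof.
move=> s0 dF dDF.
have [xi xiI E1] : exists2 xi, 0 < xi < s & second_difference F u w x s
    = s * ('D_u F (x + s *: w + xi *: u) - 'D_u F (x + xi *: u)).
  have [xi xiI E] := @MVT_pos R (fun t => F (x + s *: w + t *: u) - F (x + t *: u)) _ s s0
    (fun t => is_deriveB (is_derive_line (dF _)) (is_derive_line (dF _))).
  exists xi => //; rewrite /= in E; rewrite -E !scale0r !addr0.
  by rewrite /second_difference [x + s *: u + _]addrAC; ring.
have [eta etaI E2] := @MVT_pos R (fun t => 'D_u F (x + xi *: u + t *: w)) _ s s0
  (fun t => is_derive_line (dDF _)).
exists xi, eta; split => //.
move: E2; rewrite scale0r addr0 => E2.
by rewrite E1 [x + s *: w + _]addrAC E2; ring.
Qed.

Lemma second_difference_approx F u w x (e : R) : 0 < e ->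
  (forall y, derivable F y u) -> (forall y, derivable ('D_u F) y w) ->
  {for x, continuous ('D_w ('D_u F))} ->
  exists2 d, 0 < d & forall s, 0 < s < d ->
    `|second_difference F u w x s / s ^+ 2 - 'D_w ('D_u F) x| < e.
Proof.
move=> e0 dF dDF /cvgrPdist_lt /(_ e e0) /nbhs_ballP [d0 d00 near_x].
pose K := `|u| + `|w| + 1.
have K0 : 0 < K by rewrite ltr_pwDr ?addr_ge0.
exists (d0 / K) => [|s /andP[s0 sd]]; first exact: divr_gt0.
have [xi [eta [/andP[xi0 xis] /andP[eta0 etas] ->]]] := second_difference_mvt x s0 dF dDF.
rewrite mulrC mulKf ?expf_neq0 ?gt_eqF // distrC.
apply: near_x; rewrite -ball_normE /= -addrA opprD addrA subrr add0r normrN.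
apply: (le_lt_trans (ler_normD _ _)); rewrite !normrZ !gtr0_norm //.
have : xi * `|u| + eta * `|w| < s * K.
  by rewrite /K; have := normr_ge0 u; have := normr_ge0 w; nra.
by move/lt_le_trans; apply; rewrite -ler_pdivlMr // ltW.
Qed.

Lemma schwarz F u w x :
  (forall y, derivable F y u) -> (forall y, derivable F y w) ->
  (forall y, derivable ('D_u F) y w) -> (forall y, derivable ('D_w F) y u) ->
  {for x, continuous ('D_w ('D_u F))} -> {for x, continuous ('D_u ('D_w F))} ->
  'D_w ('D_u F) x = 'D_u ('D_w F) x.
Proof.
move=> dFu dFw dDu dDw cu cw; apply/eqP; rewrite -subr_eq0 -normr_le0.
apply/ler_addgt0Pr => e e0; rewrite add0r.
have e20 : 0 < e / 2 by rewrite divr_gt0.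
have [d1 d10 approx_uw] := second_difference_approx e20 dFu dDu cu.
have [d2 d20 approx_wu] := second_difference_approx e20 dFw dDw cw.
pose s := Num.min d1 d2 / 2.
have s0 : 0 < s by rewrite divr_gt0 // lt_min d10 d20.
have sd (d : R) : Num.min d1 d2 <= d -> 0 < s < d.
  move=> md; rewrite s0 /=; apply: lt_le_trans md.
  by rewrite /s ltr_pdivrMr // ltr_pMr ?ltr1n // lt_min d10 d20.
have sd1 : 0 < s < d1 by apply: sd; rewrite ge_min lexx.
have sd2 : 0 < s < d2 by apply: sd; rewrite ge_min lexx orbT.
have := approx_uw s sd1; rewrite second_differenceC => near_A.
have near_B := approx_wu s sd2.
apply: le_trans (ler_distD (second_difference F w u x s / s ^+ 2) _ _) _.
by rewrite [e]splitr distrC; apply/ltW/ltrD; [exact: near_A | exact: near_B].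
Qed.

End Schwarz.

Section Partials.
Variables (R : realType) (N : nat).
Implicit Types (F : 'rV[R]_N -> R) (x v : 'rV[R]_N).

Lemma partialE F i x : partial i F x = 'D_(delta_mx 0 i) F x.
Proof. by []. Qed.

Lemma smooth_partial F i : smooth_on setT F -> smooth_on setT (partial i F).
Proof. by move=> sF s x _; have := sF (rcons s i) x I; rewrite /iter_partial foldr_rcons. Qed.

Lemma smooth_differentiable F x : smooth_on setT F -> differentiable F x.
Proof. by move=> sF; exact: (sF [::] x I). Qed.

Lemma smooth_derivable F x v : smooth_on setT F -> derivable F x v.
Proof. by move=> /(smooth_differentiable x)/diff_derivable. Qed.

Lemma partial_cst F c i x : (forall y, F y = c) -> partial i F x = 0.
Proof. by move=> Fc; rewrite (_ : F = cst c) ?partialE ?derive_cst //; apply/funext. Qed.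

Lemma deriveE_partial F x v : differentiable F x ->
  'D_v F x = \sum_(i < N) v 0 i * partial i F x.
Proof.
move=> dF; rewrite deriveE // {1}(row_sum_delta v) linear_sum.
by apply: eq_bigr => i _; rewrite linearZ /= partialE deriveE.
Qed.

Lemma derive_neq0_partial F x v :
  differentiable F x -> 'D_v F x != 0 -> exists i, partial i F x != 0.
Proof.
move=> dF; rewrite deriveE_partial // => /eqP sum_neq0; apply: contrapT => none.
apply: sum_neq0; apply: big1 => i _.
by have [->|fi0] := eqVneq (partial i F x) 0; [rewrite mulr0 | case: none; exists i].
Qed.

Lemma partial_div F (G : 'rV[R]_N -> R) i x : G x != 0 ->
  differentiable F x -> differentiable G x ->
  partial i (fun y => F y / G y) x = (partial i F x * G x - F x * partial i G x) / G x ^+ 2.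
Proof.
move=> G0 dF dG.
have {}dF : derivable F x 'e_i by exact: diff_derivable.
have {}dG : derivable G x 'e_i by exact: diff_derivable.
rewrite !partialE (deriveM dF (derivableV G0 dG)) (deriveV G0 dG) /GRing.scale /=.
by field.
Qed.

Lemma partialC F i j x : smooth_on setT F ->
  partial i (partial j F) x = partial j (partial i F) x.
Proof.
move=> sF; have sF' k := smooth_partial k sF.
apply: schwarz => [y|y|y|y||].
- exact: smooth_derivable sF.
- exact: smooth_derivable sF.
- exact: smooth_derivable (sF' j).
- exact: smooth_derivable (sF' i).
- apply: differentiable_continuous; exact: smooth_differentiable (smooth_partial i (sF' j)).
- apply: differentiable_continuous; exact: smooth_differentiable (smooth_partial j (sF' i)).
Qed.

End Partials.

Section SolitonBaseEquation.
Variables (R : realType) (n : nat).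

Definition hessian_parallel_gradient (f : 'rV[R]_n -> R) := forall x i j k,
  partial i (partial j f) x * partial k f x = partial k (partial j f) x * partial i f x.

Lemma hessian_parallel_gradient_soliton (f h : 'rV[R]_n -> R) (m : nat) (rho : R) :
  smooth_on setT f -> smooth_on setT h -> (forall x, 0 < f x) -> m != 0%N ->
  (forall x i j, partial i (partial j h) x - m%:R * partial i (partial j f) x / f x
     = rho * (i == j)%:R) ->
  hessian_parallel_gradient f.
Proof.
move=> sf sh fpos m0 base x i j k.
have f0 y : f y != 0 by rewrite gt_eqF.
have mR : m%:R != 0 :> R by rewrite pnatr_eq0.
pose T a b := partial a (partial b h) - cst (rho * (a == b)%:R).
have hessE a b : m%:R \*o partial a (partial b f) = f * T a b.
  apply/funext => y; rewrite /T !fctE /=.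
  have := base y a b; move: (partial a (partial b f) y) (partial a (partial b h) y).
  by move=> Fab Hab <-; field; rewrite f0.
have d3E a b c : m%:R * partial c (partial a (partial b f)) x
    = f x * partial c (partial a (partial b h)) x + T a b x * partial c f x.
  have dh : derivable (partial a (partial b h)) x 'e_c.
    exact: smooth_derivable (smooth_partial a (smooth_partial b sh)).
  have dfab : derivable (partial a (partial b f)) x 'e_c.
    exact: smooth_derivable (smooth_partial a (smooth_partial b sf)).
  have df : derivable f x 'e_c := smooth_derivable sf.
  have [dT DT] := is_deriveB (derivableP dh) (is_derive_cst (rho * (a == b)%:R) x 'e_c).
  have := deriveMl m%:R dfab; rewrite hessE (deriveM df dT) DT subr0 => E.
  exact: esym E.
have eq_remainders (F1 F2 H1 H2 a b : R) :
    m%:R * F1 = f x * H1 + a -> m%:R * F2 = f x * H2 + b -> F1 = F2 -> H1 = H2 -> a = b.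
  by move=> E1 E2 eF eH; apply: (@addrI _ (f x * H1)); rewrite -E1 eF E2 eH.
have := eq_remainders _ _ _ _ _ _ (d3E i j k) (d3E k j i)
  (partialC k i x (smooth_partial j sf)) (partialC k i x (smooth_partial j sh)).
move/(congr1 (fun r => f x / m%:R * r)).
have hess_ab a b : partial a (partial b f) x = f x / m%:R * T a b x.
  have := congr1 (fun F => F x) (hessE a b); rewrite !fctE /= => E.
  by apply: (mulfI mR); rewrite E; field.
by rewrite !hess_ab !mulrA.
Qed.

End SolitonBaseEquation.

Lemma is_derive_lincomb (R : realType) (V : normedModType R) (n : nat)
    (g : 'I_n -> V -> R) (c dg : 'I_n -> R) x v :
  (forall j, is_derive x v (g j) (dg j)) ->
  is_derive x v (fun y => \sum_(j < n) c j * g j y) (\sum_(j < n) c j * dg j).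
Proof.
move=> D; have -> : (fun y => \sum_(j < n) c j * g j y) = \sum_(j < n) (c j \*: g j).
  by rewrite fct_sumE; apply/funext.
by apply: is_derive_sum => j; apply: is_deriveZ.
Qed.

(* Used with g j t := d_j f (x + t v), c := v and A j t := d_k d_j f (x + t v). *)
Section LinkedFamily.
Variables (R : realType) (n : nat) (g A : 'I_n -> R -> R) (c : 'I_n -> R) (k : 'I_n).
Let u t := \sum_(j < n) c j * g j t.
Hypothesis dg : forall j t, derivable (g j) t 1.
Hypothesis g'_gk : forall j t, 'D_1 (g j) t * g k t = A j t * u t.
Hypothesis sumA : forall t, \sum_(j < n) c j * A j t = 'D_1 (g k) t.

Lemma linked_family_locally_cst t0 : u t0 = 0 -> g k t0 != 0 ->
  exists2 d : R, 0 < d & forall s j, `|s - t0| < d -> g j s = g j t0.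
Proof.
move=> u0 gk0.
have [d d0 gk_near] : exists2 d : R, 0 < d & forall s, `|s - t0| < d -> g k s != 0.
  have /derivable1_diffP/differentiable_continuous := dg (j:=k) (t:=t0).
  move=> /cvgrPdist_lt/(_ `|g k t0|).
  rewrite normr_gt0 => /(_ gk0)/nbhs_ballP[d d0 near_t0]; exists d => // s st0.
  apply: contraTneq (near_t0 s _) => [->|]; first by rewrite subr0 ltxx.
  by rewrite -ball_normE /= distrC.
(* (u / g_k)' = 0 near t0, so u vanishes there; then g_j' g_k = A_j u gives g_j' = 0. *)
have u_near s : `|s - t0| < d -> u s = 0.
  move=> sd; have gs := gk_near s sd.
  have Dw r : `|r - t0| < d -> is_derive r 1 (fun r => u r / g k r) 0.
    move=> rd; have gr := gk_near r rd.
    have Du := is_derive_lincomb c (fun j => derivableP (dg (j:=j) (t:=r))).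
    apply: is_derive_eq (is_deriveM Du (is_deriveV gr (derivableP (dg (j:=k) (t:=r))))) _.
    have E : (\sum_(j < n) c j * 'D_1 (g j) r) * g k r = u r * 'D_1 (g k) r.
      rewrite mulr_suml -sumA mulr_sumr; apply: eq_bigr => j _.
      by rewrite -mulrA g'_gk; ring.
    rewrite -[\sum_(j < n) c j * g j r]/(u r) -[\sum_(j < n) _](mulfK gr) E.
    by rewrite /GRing.scale /=; field; rewrite gr.
  have := is_derive0_cst_ball Dw sd; rewrite /= u0 mul0r => /eqP.
  by rewrite mulf_eq0 invr_eq0 (negbTE gs) orbF => /eqP.
exists d => // s j sd; apply: is_derive0_cst_ball sd => r rd.
apply: is_derive_eq (derivableP (dg (j:=j) (t:=r))) _; apply/eqP.
have := g'_gk j r; rewrite u_near // mulr0 => /eqP.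
by rewrite mulf_eq0 (negbTE (gk_near r rd)) orbF.
Qed.

Lemma linked_family_cst : u 0 = 0 -> g k 0 != 0 -> forall t j, g j t = g j 0.
Proof.
move=> u0 gk0.
pose B := \bigcap_(j in [set: 'I_n]) (g j @^-1` [set g j 0]).
have BE t : B t -> forall j, g j t = g j 0 by move=> Bt j; exact: Bt.
have oB : open B.
  rewrite openE => t0 /BE Bt0.
  have ut0 : u t0 = 0 by rewrite -u0; apply: eq_bigr => j _; rewrite Bt0.
  have gkt0 : g k t0 != 0 by rewrite Bt0.
  have [d d0 near_t0] := linked_family_locally_cst ut0 gkt0.
  apply/nbhs_ballP; exists d => // s; rewrite -ball_normE /= distrC => sd j _.
  by rewrite /= near_t0 ?Bt0.
have cB : closed B.
  apply: closed_bigI => j _; apply: preimage_closed; last exact: closed_eq.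
  by move=> t _; apply: differentiable_continuous; apply/derivable1_diffP.
have connT : connected [set: R] by apply/connected_intervalP.
have BT : B = setT.
  by apply: connT; [exists 0 => j | exists B; rewrite ?setTI..].
by move=> t j; apply: BE; rewrite BT.
Qed.

End LinkedFamily.

Section HessianParallelGradient.
Variables (R : realType) (n : nat) (f : 'rV[R]_n -> R).
Hypotheses (sf : smooth_on setT f) (hpg : hessian_parallel_gradient f).

Let derive_fE x v : 'D_v f x = \sum_(i < n) v 0 i * partial i f x.
Proof. exact: deriveE_partial (smooth_differentiable x sf). Qed.

Lemma derive_partial_line j x v t :
  'D_1 (fun s : R => partial j f (x + s *: v)) t
  = \sum_(i < n) v 0 i * partial i (partial j f) (x + t *: v).
Proof.
by rewrite derive_line deriveE_partial //; apply: smooth_differentiable; apply: smooth_partial.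
Qed.

Lemma derive_eq_partial_eq y z v : (forall j, partial j f y = partial j f z) ->
  'D_v f y = 'D_v f z.
Proof.
by move=> yz; rewrite !derive_fE; apply: eq_bigr => j _; rewrite yz.
Qed.

Lemma partial_cst_along_tangent_line x v k : partial k f x != 0 -> 'D_v f x = 0 ->
  forall t j, partial j f (x + t *: v) = partial j f x.
Proof.
move=> fk0 Dv0 t j.
pose g j (s : R) := partial j f (x + s *: v).
pose A j (s : R) := partial k (partial j f) (x + s *: v).
have := @linked_family_cst R n g A (fun i => v 0 i) k _ _ _ _ _ t j.
rewrite /g scale0r addr0; apply => {t j} [j t|j t|t||//].
- by apply/derivable_line; apply: smooth_derivable; apply: smooth_partial.
- rewrite derive_partial_line mulr_suml mulr_sumr; apply: eq_bigr => i _.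
  rewrite -mulrA; apply: etrans (congr1 (fun z => v 0 i * z) (hpg _ i j k)) _.
  exact: mulrCA.
- rewrite derive_partial_line; apply: eq_bigr => i _.
  by rewrite /A (partialC k i _ sf).
- by rewrite -[RHS]Dv0 derive_fE.
Qed.

Lemma tangent_derive_eq0 x0 k y v : partial k f x0 != 0 -> 'D_v f x0 = 0 -> 'D_v f y = 0.
Proof.
move=> fk0 Dv0; have [//|Dy] := eqVneq ('D_v f y) 0.
have [k' fk'0] := derive_neq0_partial (smooth_differentiable y sf) Dy.
pose s := 'D_(y - x0) f y / 'D_v f y; pose z := x0 + s *: v.
have z_x0 j : partial j f z = partial j f x0 := partial_cst_along_tangent_line fk0 Dv0 _ j.
have Dzy : 'D_(z - y) f y = 0.
  have dfy := smooth_differentiable y sf.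
  rewrite (_ : z - y = s *: v - (y - x0)); last by rewrite /z opprB [x0 + _]addrC -addrA.
  by rewrite deriveE // linearB linearZ /= -!deriveE // /s /GRing.scale /= divfK // subrr.
have z_y j : partial j f z = partial j f y.
  by rewrite -(partial_cst_along_tangent_line fk'0 Dzy 1) scale1r addrC subrK.
by rewrite -Dv0; apply: derive_eq_partial_eq => j; rewrite -z_y z_x0.
Qed.

Lemma ridge_hessian_parallel_gradient : exists (a : 'I_n -> R) (c : 'rV[R]_n),
  forall x, f x = f ((\sum_(i < n) a i * x 0 i) *: c).
Proof.
have cst_line x v : (forall y, 'D_v f y = 0) -> f (x + v) = f x.
  by apply: derive_eq0_cst_line => y; exact: smooth_derivable sf.
have [[x0 [k fk0]]|flat] := pselect (exists x0 k, partial k f x0 != 0); last first.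
  exists (fun=> 0), 0 => x; rewrite scaler0 -[x]add0r cst_line // => y.
  rewrite derive_fE big1 // => i _.
  by have [->|fi0] := eqVneq (partial i f y) 0; [rewrite mulr0 | case: flat; exists y, i].
exists (fun i => partial i f x0), ((partial k f x0)^-1 *: 'e_k) => x.
set l := \sum_(i < n) _; set c := _ *: 'e_k.
have dfx0 := smooth_differentiable x0 sf.
have Dx : 'D_x f x0 = l by rewrite derive_fE; apply: eq_bigr => i _; rewrite mulrC.
have Dc : 'D_c f x0 = 1 by rewrite deriveE // linearZ /= -deriveE // /GRing.scale /= mulVf.
rewrite -[x in LHS](subrK (l *: c)) addrC cst_line // => y.
apply: (tangent_derive_eq0 _ fk0).
by rewrite deriveE // linearB linearZ /= -!deriveE // Dx Dc /GRing.scale /= mulr1 subrr.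
Qed.

Lemma line_restriction_C1 (c : 'rV[R]_n) :
  (forall t, derivable (fun s : R => f (s *: c)) t 1) /\
  continuous (derive1 (fun s : R => f (s *: c))).
Proof.
have -> : (fun s : R => f (s *: c)) = (fun s => f ((0 : 'rV[R]_n) + s *: c)).
  by apply/funext => s; rewrite add0r.
split => [t|]; first by apply/derivable_line; exact: smooth_derivable sf.
have -> : derive1 (fun s => f (0 + s *: c))
          = fun t => \sum_(i < n) c 0 i * partial i f (0 + t *: c).
  by apply/funext => t; rewrite derive1E derive_line derive_fE.
move=> t; apply: differentiable_continuous; apply/derivable1_diffP.
have Dpartial i : is_derive t 1 (fun s : R => partial i f (0 + s *: c))
    ('D_c (partial i f) (0 + t *: c)).
  exact: is_derive_line (smooth_derivable (smooth_partial i sf)).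
by case: (is_derive_lincomb (fun i => c 0 i) Dpartial).
Qed.

End HessianParallelGradient.

Section BlockMatrices.
Variables (n m : nat).

Lemma invmx_block1 (F : fieldType) (D : 'M[F]_m) :
  invmx (block_mx 1%:M 0 0 D : 'M[F]_(n + m)) = block_mx 1%:M 0 0 (invmx D).
Proof.
have unitE : (block_mx 1%:M 0 0 D : 'M[F]_(n + m)) \in unitmx = (D \in unitmx).
  by rewrite !unitmxE det_ublock det1 mul1r.
have [uD|uD] := boolP (D \in unitmx); last by rewrite !invmx_out ?inE ?unitE.
set A := block_mx _ _ _ _; have uA : A \in unitmx by rewrite unitE.
have BA : block_mx 1%:M 0 0 (invmx D) *m A = 1%:M.
  rewrite mulmx_block !mulmx0 !mul0mx !addr0 !add0r mulmx1 mulVmx //.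
  by rewrite [RHS]scalar_mx_block.
by rewrite -[invmx A]mul1mx -BA -mulmxA mulmxV // mulmx1.
Qed.

Lemma posdef_unitmx (F : numFieldType) (M : 'M[F]_m) :
  (forall v : 'rV[F]_m, v != 0 -> 0 < (v *m M *m v^T) 0 0) -> M \in unitmx.
Proof.
move=> pos; apply: contraT => nuM.
have /matrix0Pn[i [j kerij]] : kermx M != 0 by rewrite kermx_eq0 row_free_unit.
have v0 : row i (kermx M) != 0 by apply/matrix0Pn; exists 0, j; rewrite mxE.
by have := pos _ v0; rewrite -row_mul mulmx_ker row0 mul0mx mxE ltxx.
Qed.

Lemma lsubmx_line_lshift (R : pzRingType) (q : 'rV[R]_(n + m)) i (t : R) :
  lsubmx (q + t *: 'e_(lshift m i)) = lsubmx q + t *: 'e_i.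
Proof. by apply/matrixP => a b; rewrite !mxE eq_lshift. Qed.

Lemma rsubmx_line_lshift (R : pzRingType) (q : 'rV[R]_(n + m)) i (t : R) :
  rsubmx (q + t *: 'e_(lshift m i)) = rsubmx q.
Proof. by apply/matrixP => a b; rewrite !mxE eq_rlshift andbF mulr0 addr0. Qed.

Lemma partial_lshift (R : realType) (Phi : 'rV[R]_(n + m) -> R) (Psi : 'rV[R]_n -> R) q i :
  (forall t, Phi (q + t *: 'e_(lshift m i)) = Psi (lsubmx q + t *: 'e_i)) ->
  partial (lshift m i) Phi q = partial i Psi (lsubmx q).
Proof. exact: derive_eq_on_lines. Qed.

Lemma partial_lshift_lsubmx (R : realType) (Psi : 'rV[R]_n -> R) q i :
  partial (lshift m i) (fun q => Psi (lsubmx q)) q = partial i Psi (lsubmx q).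
Proof. by apply: partial_lshift => t; rewrite lsubmx_line_lshift. Qed.

End BlockMatrices.

Section WarpedProduct.
Variables (R : realType) (n m : nat) (f : 'rV[R]_n -> R) (gF : 'rV[R]_m -> 'M[R]_m).
Local Notation g := (warped_metric f gF).
Local Notation base i := (lshift m i).
Local Notation fibre a := (rshift n a).

Lemma warped_metric_base q j l : g q (base j) l = (base j == l)%:R.
Proof.
rewrite /warped_metric -(splitK l); case: (fintype.split l) => [l'|b] /=.
  by rewrite block_mxEul mxE eq_lshift.
by rewrite block_mxEur mxE eq_lrshift.
Qed.

Lemma warped_metric_baseC q j l : g q l (base j) = (l == base j)%:R.
Proof.
rewrite /warped_metric -(splitK l); case: (fintype.split l) => [l'|b] /=.
  by rewrite block_mxEul mxE eq_lshift.
by rewrite block_mxEdl mxE eq_rlshift.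
Qed.

Lemma warped_metric_fibre q a b :
  g q (fibre a) (fibre b) = f (lsubmx q) ^+ 2 * gF (rsubmx q) a b.
Proof. by rewrite /warped_metric block_mxEdr mxE. Qed.

Lemma invmx_warped_metric q :
  invmx (g q) = block_mx 1%:M 0 0 (invmx (f (lsubmx q) ^+ 2 *: gF (rsubmx q))).
Proof. exact: invmx_block1. Qed.

Lemma partial_warped_metric_base k j l q : partial k (fun q => g q (base j) l) q = 0.
Proof. by apply: partial_cst => q'; rewrite warped_metric_base. Qed.

Lemma partial_warped_metric_baseC k j l q : partial k (fun q => g q l (base j)) q = 0.
Proof. by apply: partial_cst => q'; rewrite warped_metric_baseC. Qed.

Lemma partial_warped_metric_fibre i a b q : differentiable f (lsubmx q) ->
  partial (base i) (fun q => g q (fibre a) (fibre b)) q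
  = 2 * f (lsubmx q) * partial i f (lsubmx q) * gF (rsubmx q) a b.
Proof.
move=> df; have {}df : derivable f (lsubmx q) 'e_i by exact: diff_derivable.
rewrite (@partial_lshift _ _ _ _ (f ^+ 2 * cst (gF (rsubmx q) a b))) => [|t]; last first.
  by rewrite warped_metric_fibre lsubmx_line_lshift rsubmx_line_lshift.
rewrite partialE; have [_ ->] := is_deriveM (is_deriveX 2 (derivableP df))
  (is_derive_cst (gF (rsubmx q) a b) (lsubmx q) 'e_i).
by rewrite -partialE /GRing.scale /= expr1; ring.
Qed.

Lemma Christoffel_warped_base l i j q : Christoffel g l (base i) (base j) q = 0.
Proof.
rewrite /Christoffel big1 ?mulr0 // => l' _.
by rewrite !partial_warped_metric_base subr0 addr0 mulr0.
Qed.

Lemma Christoffel_warped_base_mixed k j b q : Christoffel g (base k) (base j) (fibre b) q = 0.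
Proof.
rewrite /Christoffel big1 ?mulr0 // => l _.
rewrite !partial_warped_metric_base subr0 addr0 -(splitK l).
case: (fintype.split l) => [l'|c] /=; first by rewrite partial_warped_metric_baseC mulr0.
by rewrite invmx_warped_metric block_mxEur mxE mul0r.
Qed.

Lemma Christoffel_warped_fibre_mixed a i b q :
  gF (rsubmx q) \in unitmx -> (gF (rsubmx q))^T = gF (rsubmx q) ->
  f (lsubmx q) != 0 -> differentiable f (lsubmx q) ->
  Christoffel g (fibre a) (base i) (fibre b) q
  = partial i f (lsubmx q) / f (lsubmx q) * (a == b)%:R.
Proof.
set x := lsubmx q; set y := rsubmx q => unit_gF sym_gF f0 df.
have ginv c : invmx (g q) (fibre a) (fibre c) = (f x ^+ 2)^-1 * invmx (gF y) a c.
  by rewrite invmx_warped_metric block_mxEdr invmxZ ?mxE // unitmxZ // unitfE expf_neq0.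
have gF_sym c : gF y b c = gF y c b by rewrite -[in LHS]sym_gF mxE.
have inv_gF : \sum_(c < m) invmx (gF y) a c * gF y c b = (a == b)%:R.
  transitivity ((invmx (gF y) *m gF y) a b); first by rewrite mxE.
  by rewrite mulVmx // mxE.
rewrite /Christoffel big_split_ord /= [X in X + _]big1 => [|l _]; last first.
  by rewrite invmx_warped_metric block_mxEdl mxE mul0r.
under eq_bigr => c _ do rewrite ginv partial_warped_metric_fibre //
  !partial_warped_metric_base subr0 addr0 gF_sym.
rewrite add0r -inv_gF mulr_sumr mulr_sumr; apply: eq_bigr => c _.
by field.
Qed.

Lemma partial_Christoffel_warped_fibre_mixed p a i j :
  gF (rsubmx p) \in unitmx -> (gF (rsubmx p))^T = gF (rsubmx p) ->
  (forall x, 0 < f x) -> smooth_on setT f ->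
  partial (base j) (Christoffel g (fibre a) (base i) (fibre a)) p
  = (partial j (partial i f) (lsubmx p) * f (lsubmx p)
     - partial i f (lsubmx p) * partial j f (lsubmx p)) / f (lsubmx p) ^+ 2.
Proof.
move=> unit_gF sym_gF fpos sf; have f0 x : f x != 0 by rewrite gt_eqF.
rewrite (@partial_lshift _ _ _ _ (fun x => partial i f x / f x)) => [|t].
  by rewrite partial_div //; apply: smooth_differentiable; first apply: smooth_partial.
rewrite Christoffel_warped_fibre_mixed ?rsubmx_line_lshift ?lsubmx_line_lshift //.
- by rewrite eqxx mulr1.
- exact: smooth_differentiable.
Qed.

Lemma Ricci_warped_base p i j :
  gF (rsubmx p) \in unitmx -> (gF (rsubmx p))^T = gF (rsubmx p) ->
  (forall x, 0 < f x) -> smooth_on setT f ->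
  Ricci g (base i) (base j) p = - (m%:R * partial i (partial j f) (lsubmx p) / f (lsubmx p)).
Proof.
move=> unit_gF sym_gF fpos sf; set x := lsubmx p.
have f0 : f x != 0 by rewrite gt_eqF.
have Gamma_fibre c a b : Christoffel g (fibre a) (base c) (fibre b) p = partial c f x / f x * (a == b)%:R.
  by rewrite Christoffel_warped_fibre_mixed // ?gt_eqF //; exact: smooth_differentiable.
have fibre_term a : partial (fibre a) (Christoffel g (fibre a) (base i) (base j)) p
    - partial (base j) (Christoffel g (fibre a) (base i) (fibre a)) p
    + \sum_(l < n + m) (Christoffel g (fibre a) (fibre a) l p * Christoffel g l (base i) (base j) p
        - Christoffel g (fibre a) (base j) l p * Christoffel g l (base i) (fibre a) p)
    = - (partial j (partial i f) x / f x).
  rewrite (partial_cst _ _ (Christoffel_warped_base _ _ _)) sub0r.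
  rewrite partial_Christoffel_warped_fibre_mixed // big_split_ord /=.
  rewrite [X in _ + (X + _)]big1 => [|l _]; last first.
    by rewrite Christoffel_warped_base Christoffel_warped_base_mixed !mulr0 subrr.
  rewrite add0r (bigD1 a) //= big1 => [|b ba]; last first.
    by rewrite Christoffel_warped_base !Gamma_fibre eq_sym (negbTE ba) !mulr0 subrr.
  rewrite Christoffel_warped_base !Gamma_fibre eqxx !mulr1 mulr0 sub0r addr0; field.
  by rewrite f0.
rewrite /Ricci big_split_ord /= [X in X + _]big1 => [|k _]; last first.
  rewrite !(partial_cst _ _ (Christoffel_warped_base _ _ _)) subrr add0r.
  by rewrite big1 // => l _; rewrite !Christoffel_warped_base !mulr0 subrr.
rewrite add0r (eq_bigr _ (fun a _ => fibre_term a)) sumr_const card_ord.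
by rewrite (partialC i j x sf); field.
Qed.

Lemma Hess_warped_base (h : 'rV[R]_n -> R) p i j :
  Hess g (fun q => h (lsubmx q)) (base i) (base j) p = partial i (partial j h) (lsubmx p).
Proof.
rewrite /Hess big1 => [|k _]; last by rewrite Christoffel_warped_base mul0r.
have -> : partial (base j) (fun q => h (lsubmx q)) = (fun q => partial j h (lsubmx q)).
  by apply/funext => q; rewrite partial_lshift_lsubmx.
by rewrite subr0 partial_lshift_lsubmx.
Qed.

End WarpedProduct.

Theorem theorem1 (R : realType) (n m : nat) (U : set 'rV[R]_m)
  (gF : 'rV[R]_m -> 'M[R]_m) (f h : 'rV[R]_n -> R) (rho : R) :
  (2 <= n)%N -> (1 <= m)%N ->
  open U -> U !=set0 -> riemannian_metric_on U gF ->
  smooth_on setT f -> smooth_on setT h -> (forall x, 0 < f x) ->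
  (forall p : 'rV[R]_(n + m), U (rsubmx p) -> forall i j : 'I_(n + m),
      Ricci (warped_metric f gF) i j p
      + Hess (warped_metric f gF) (fun q => h (lsubmx q)) i j p
      = rho * warped_metric f gF p i j) ->
  exists a b : 'I_n -> R, exists P : R -> R,
    (forall t, derivable P t 1) /\ continuous (derive1 P) /\
    forall x : 'rV[R]_n, f x = P (\sum_(i < n) (a i * x ord0 i + b i)).
Proof.
move=> _ m_gt0 _ [y0 Uy0] [_ [sym_gF pos_gF]] sf sh fpos soliton.
have base_eq x i j : partial i (partial j h) x - m%:R * partial i (partial j f) x / f x
    = rho * (i == j)%:R.
  pose p : 'rV[R]_(n + m) := row_mx x y0.
  have [lp rp] : lsubmx p = x /\ rsubmx p = y0 by rewrite row_mxKl row_mxKr.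
  have Up : U (rsubmx p) by rewrite rp.
  have unit_p : gF (rsubmx p) \in unitmx by rewrite rp; exact: posdef_unitmx (pos_gF y0 Uy0).
  have sym_p : (gF (rsubmx p))^T = gF (rsubmx p) by rewrite rp; exact: sym_gF.
  have := soliton p Up (lshift m i) (lshift m j).
  rewrite (Ricci_warped_base i j unit_p sym_p fpos sf) Hess_warped_base warped_metric_base.
  by rewrite eq_lshift lp addrC.
have hpg := hessian_parallel_gradient_soliton sf sh fpos (lt0n_neq0 m_gt0) base_eq.
have [a [c fE]] := ridge_hessian_parallel_gradient sf hpg.
have [dP cP] := line_restriction_C1 sf c.
exists a, (fun=> 0), (fun s => f (s *: c)); split; first exact: dP.
split; first exact: cP.
by move=> x; rewrite fE; congr (f (_ *: c)); apply: eq_bigr => i _; rewrite addr0.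
Qed.
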